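(* Let $X=\{\{k\}:k\in\mathbb{Z}\}\cup\{\{k,k+1\}:k\in\mathbb{Z}\}$ be the infinite $1$-dimensional simplicial complex of the integer line. Consider the operators $L$ and $|H|$ on $\ell^2(X)$, defined in the context. Then $L$ is a bounded operator, it is invertible with bounded inverse $L^{-1}$, and $$|H|=L-L^{-1}.$$
   Context: The operator $L$ on $\ell^2(X)$ is given by the matrix $L(x,y)=1$ if $x\cap y\neq\emptyset$ and $L(x,y)=0$ otherwise, for $x,y\in X$. The sign-less exterior derivative $|d|$ is given by the matrix $|d|(x,y)=1$ if $y\subset x$ and $|x|=|y|+1$, and $0$ otherwise. The operator $|H|$ is defined as $|H|=(|d|+|d|^* )^2$. All matrices have finitely many nonzero entries in each row and column, with uniformly bounded entries. *)

From Stdlib Require Import Reals ZArith List Bool.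
Open Scope R_scope.

(* The simplices of the integer line: X = {{k}} ∪ {{k,k+1}}, k ∈ Z. *)
Inductive simplex : Type :=
| Vtx (k : Z)
| Edg (k : Z).

Definition verts (x : simplex) : list Z :=
  match x with
  | Vtx k => k :: nil
  | Edg k => k :: (k + 1)%Z :: nil
  end.

Definition memb (z : Z) (x : simplex) : bool := existsb (Z.eqb z) (verts x).

Definition card (x : simplex) : nat := length (verts x).

Definition meets (x y : simplex) : bool := existsb (fun z => memb z y) (verts x).

Definition subsetb (y x : simplex) : bool := forallb (fun z => memb z x) (verts y).

Definition Lmat (x y : simplex) : R := if meets x y then 1 else 0.

Definition absd (x y : simplex) : R :=
  if subsetb y x && Nat.eqb (card x) (S (card y)) then 1 else 0.

(* |d| + adjoint of |d| (the adjoint of a real matrix is its transpose) *)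
Definition Dmat (x y : simplex) : R := absd x y + absd y x.

(* Enumeration of X by Z (a bijection): even n -> {n/2}, odd n -> {(n-1)/2,(n+1)/2}. *)
Definition enum (n : Z) : simplex :=
  if Z.odd n then Edg (Z.div2 n) else Vtx (Z.div2 n).

Definition zsum (g : Z -> R) (N : nat) : R :=
  sum_f_R0 (fun i => g (Z.of_nat i - Z.of_nat N)%Z) (2 * N).

Definition psum2 (f : simplex -> R) (N : nat) : R :=
  zsum (fun n => (f (enum n))²) N.

(* f ∈ ℓ^2(X): nonnegative series with bounded partial sums *)
Definition is_l2 (f : simplex -> R) : Prop := exists B, forall N, psum2 f N <= B.

Definition op := (simplex -> R) -> (simplex -> R).

(* T is a bounded (linear) operator on ℓ^2(X):
   linear on ℓ^2, and ||T f||^2 <= C ||f||^2, where ||f||^2 = sup_N psum2 f N. *)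
Definition bounded_op (T : op) : Prop :=
  (forall f g a, is_l2 f -> is_l2 g ->
     forall x, T (fun y => a * f y + g y) x = a * T f x + T g x) /\
  exists C, 0 <= C /\
    forall f B, (forall N, psum2 f N <= B) -> forall N, psum2 (T f) N <= C * B.

Definition mx_acts (M : simplex -> simplex -> R) (f g : simplex -> R) : Prop :=
  forall x, Un_cv (zsum (fun n => M x (enum n) * f (enum n))) (g x).

(* L and |H| are banded matrices in the enumeration of X by Z: each simplex
   only meets simplices at distance at most 2 in that enumeration.  We take
   L - |H| as the candidate inverse of L, so that |H| = L - L^{-1} holds by
   construction, and check that L (L - |H|) = (L - |H|) L = 1, which is a
   finite computation at each simplex.  Boundedness of a banded operator
   follows from Cauchy-Schwarz on the band and the shift invariance of the
   partial sums of |f|^2. *)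

From Stdlib Require Import Reals Lra Lia ZArith List.
Open Scope R_scope.

Lemma zsum_ext g h N : (forall n, g n = h n) -> zsum g N = zsum h N.
Proof. intros H; unfold zsum; apply sum_eq; intros; apply H. Qed.

Lemma zsum_plus g h N : zsum (fun n => g n + h n) N = zsum g N + zsum h N.
Proof. unfold zsum; apply plus_sum. Qed.

Lemma zsum_scal c g N : zsum (fun n => c * g n) N = c * zsum g N.
Proof. unfold zsum. rewrite scal_sum. apply sum_eq; intros; ring. Qed.

Lemma zsum_le g h N : (forall n, g n <= h n) -> zsum g N <= zsum h N.
Proof. intros H; unfold zsum; apply sum_Rle; auto. Qed.

Lemma sum_f_R0_delta c m K :
  sum_f_R0 (fun i => if Nat.eqb i m then c else 0) K = if Nat.leb m K then c else 0.
Proof.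
  induction K as [|K IH]; cbn [sum_f_R0].
  - destruct (Nat.eqb_spec 0 m), (Nat.leb_spec m 0); try lia; reflexivity.
  - rewrite IH. destruct (Nat.eqb_spec (S K) m), (Nat.leb_spec m K),
      (Nat.leb_spec m (S K)); try lia; ring.
Qed.

Lemma zsum_delta p c N : (Z.abs p <= Z.of_nat N)%Z ->
  zsum (fun n => if Z.eqb n p then c else 0) N = c.
Proof.
  intros Hp. unfold zsum.
  rewrite (sum_eq _ (fun i => if Nat.eqb i (Z.to_nat (p + Z.of_nat N)) then c else 0)).
  - rewrite sum_f_R0_delta. destruct (Nat.leb_spec (Z.to_nat (p + Z.of_nat N)) (2 * N));
      [reflexivity | lia].
  - intros i _. destruct (Z.eqb_spec (Z.of_nat i - Z.of_nat N) p),
      (Nat.eqb_spec i (Z.to_nat (p + Z.of_nat N))); try reflexivity; lia.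
Qed.

Lemma Un_cv_eventually_const (u : nat -> R) c N0 :
  (forall N, (N >= N0)%nat -> u N = c) -> Un_cv u c.
Proof.
  intros H eps Heps. exists N0. intros n Hn. rewrite H by lia.
  unfold Rdist. rewrite Rminus_diag, Rabs_R0. lra.
Qed.

Lemma cv_zsum_delta p c : Un_cv (zsum (fun n => if Z.eqb n p then c else 0)) c.
Proof.
  apply (Un_cv_eventually_const _ _ (Z.to_nat (Z.abs p))).
  intros N HN. apply zsum_delta. lia.
Qed.

Lemma cv_zsum_zero : Un_cv (zsum (fun _ => 0)) 0.
Proof.
  apply (Un_cv_eventually_const _ _ 0). intros N _. unfold zsum. rewrite sum_cte. ring.
Qed.

Lemma sum_f_R0_shift_le h s K : (forall n, 0 <= h n) ->
  sum_f_R0 (fun i => h (s + i)%nat) K <= sum_f_R0 h (s + K).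
Proof.
  intros Hh. destruct s as [|s]; [apply Req_le, sum_eq; reflexivity|].
  rewrite (tech2 h s (S s + K)) by lia.
  replace (S s + K - S s)%nat with K by lia.
  pose proof (cond_pos_sum h s Hh). lra.
Qed.

Lemma sum_f_R0_le_widen h K K' : (forall n, 0 <= h n) -> (K <= K')%nat ->
  sum_f_R0 h K <= sum_f_R0 h K'.
Proof.
  intros Hh HK. destruct (Nat.eq_dec K K') as [<-|]; [lra|].
  rewrite (tech2 h K K') by lia.
  pose proof (cond_pos_sum (fun i => h (S K + i)%nat) (K' - S K) (fun n => Hh _)). lra.
Qed.

Lemma zsum_shift_le g d r N : (forall n, 0 <= g n) -> (Z.abs d <= Z.of_nat r)%Z ->
  zsum (fun n => g (n + d)%Z) N <= zsum g (N + r).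
Proof.
  intros Hg Hd. unfold zsum.
  set (h := fun j => g (Z.of_nat j - Z.of_nat (N + r))%Z).
  assert (Hh : forall n, 0 <= h n) by (intros; apply Hg).
  rewrite (sum_eq _ (fun i => h (Z.to_nat (d + Z.of_nat r) + i)%nat)).
  - eapply Rle_trans; [apply sum_f_R0_shift_le, Hh|].
    apply sum_f_R0_le_widen; [exact Hh | lia].
  - intros i _. unfold h. f_equal. lia.
Qed.

Definition pos (x : simplex) : Z :=
  match x with Vtx k => (2 * k)%Z | Edg k => (2 * k + 1)%Z end.

Lemma pos_enum n : pos (enum n) = n.
Proof.
  pose proof (Z.div2_odd n) as Hn. unfold enum.
  destruct (Z.odd n); cbn [pos Z.b2z] in *; lia.
Qed.

Lemma pos_inj x y : pos x = pos y -> x = y.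
Proof. destruct x, y; cbn [pos]; intros; first [f_equal; lia | exfalso; lia]. Qed.

Lemma enum_pos x : enum (pos x) = x.
Proof. apply pos_inj. apply pos_enum. Qed.

Lemma enum_eq n x : n = pos x -> enum n = x.
Proof. intros ->. apply enum_pos. Qed.

Definition simplex_eqb (x y : simplex) : bool :=
  match x, y with
  | Vtx i, Vtx j | Edg i, Edg j => Z.eqb i j
  | _, _ => false
  end.

Lemma simplex_eqb_pos x y : simplex_eqb x y = Z.eqb (pos x) (pos y).
Proof.
  destruct x as [i|i], y as [j|j]; cbn [simplex_eqb pos];
    destruct (Z.eqb_spec i j), (Z.eqb_spec (2 * i) (2 * j)),
      (Z.eqb_spec (2 * i) (2 * j + 1)), (Z.eqb_spec (2 * i + 1) (2 * j)),
      (Z.eqb_spec (2 * i + 1) (2 * j + 1)); try reflexivity; lia.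
Qed.

Fixpoint lsum (l : list simplex) (f : simplex -> R) : R :=
  match l with nil => 0 | z :: l => f z + lsum l f end.

Definition occ (l : list simplex) (y : simplex) : R :=
  lsum l (fun z => if simplex_eqb y z then 1 else 0).

Lemma cv_zsum_occ l f :
  Un_cv (zsum (fun n => occ l (enum n) * f (enum n))) (lsum l f).
Proof.
  induction l as [|z l IH]; simpl.
  - eapply Un_cv_ext; [|apply cv_zsum_zero].
    intros N. apply zsum_ext. intros; unfold occ; simpl; ring.
  - eapply Un_cv_ext; [|apply CV_plus; [apply (cv_zsum_delta (pos z) (f z)) | apply IH]].
    intros N. simpl. rewrite <- zsum_plus. apply zsum_ext. intros n.
    unfold occ; simpl. rewrite simplex_eqb_pos, pos_enum.
    destruct (Z.eqb_spec n (pos z)) as [->|]; [rewrite enum_pos|]; ring.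
Qed.

Lemma mx_acts_nbrs M nb f g :
  (forall x y, M x y = occ (nb x) y) -> (forall x, g x = lsum (nb x) f) -> mx_acts M f g.
Proof.
  intros HM Hg x. rewrite Hg. eapply Un_cv_ext; [|apply cv_zsum_occ].
  intros N. apply zsum_ext. intros n. rewrite HM. reflexivity.
Qed.

Definition window (f : simplex -> R) (n : Z) : R :=
  (f (enum (n - 2)))² + (f (enum (n - 1)))² + (f (enum n))²
  + (f (enum (n + 1)))² + (f (enum (n + 2)))².

Lemma window_Vtx f k : window f (pos (Vtx k)) =
  (f (Vtx (k - 1)))² + (f (Edg (k - 1)))² + (f (Vtx k))² + (f (Edg k))² + (f (Vtx (k + 1)))².
Proof.
  unfold window.
  rewrite (enum_eq _ (Vtx (k - 1))), (enum_eq _ (Edg (k - 1))), (enum_eq _ (Vtx k)),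
    (enum_eq _ (Edg k)), (enum_eq _ (Vtx (k + 1))) by (cbn [pos]; lia).
  reflexivity.
Qed.

Lemma window_Edg f k : window f (pos (Edg k)) =
  (f (Edg (k - 1)))² + (f (Vtx k))² + (f (Edg k))² + (f (Vtx (k + 1)))² + (f (Edg (k + 1)))².
Proof.
  unfold window.
  rewrite (enum_eq _ (Edg (k - 1))), (enum_eq _ (Vtx k)), (enum_eq _ (Edg k)),
    (enum_eq _ (Vtx (k + 1))), (enum_eq _ (Edg (k + 1))) by (cbn [pos]; lia).
  reflexivity.
Qed.

Lemma Rsqr_sum5_le a b c d e : (a + b + c + d + e)² <= 5 * (a² + b² + c² + d² + e²).
Proof.
  unfold Rsqr.
  assert (0 <= (a-b)*(a-b) + (a-c)*(a-c) + (a-d)*(a-d) + (a-e)*(a-e) + (b-c)*(b-c)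
     + (b-d)*(b-d) + (b-e)*(b-e) + (c-d)*(c-d) + (c-e)*(c-e) + (d-e)*(d-e)).
  { repeat apply Rplus_le_le_0_compat; apply Rle_0_sqr. }
  nra.
Qed.

Lemma psum2_le_window (T : op) C f B : 0 <= C ->
  (forall x, (T f x)² <= C * window f (pos x)) ->
  (forall N, psum2 f N <= B) -> forall N, psum2 (T f) N <= 5 * C * B.
Proof.
  intros HC HT HB N. unfold psum2.
  eapply Rle_trans.
  { apply zsum_le. intro n. specialize (HT (enum n)). rewrite pos_enum in HT. exact HT. }
  rewrite zsum_scal. unfold window. rewrite !zsum_plus.
  assert (Hshift : forall d, (Z.abs d <= 2)%Z ->
            zsum (fun n => (f (enum (n + d)))²) N <= B).
  { intros d Hd. eapply Rle_trans; [apply (zsum_shift_le (fun m => (f (enum m))²) d 2 N) |];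
      [intros; apply Rle_0_sqr | exact Hd | apply HB]. }
  pose proof (Hshift (-2)%Z ltac:(lia)) as Hm2.
  change (zsum (fun n => (f (enum (n - 2)))²) N <= B) in Hm2.
  pose proof (Hshift (-1)%Z ltac:(lia)) as Hm1.
  change (zsum (fun n => (f (enum (n - 1)))²) N <= B) in Hm1.
  pose proof (Hshift 0%Z ltac:(lia)) as H0.
  rewrite (zsum_ext _ (fun n => (f (enum n))²)) in H0 by (intros; rewrite Z.add_0_r; reflexivity).
  pose proof (Hshift 1%Z ltac:(lia)) as H1.
  pose proof (Hshift 2%Z ltac:(lia)) as H2.
  replace (5 * C * B) with (C * (5 * B)) by ring.
  apply Rmult_le_compat_l; [exact HC | lra].
Qed.

Lemma bounded_op_of_window (T : op) C : 0 <= C ->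
  (forall f g a x, T (fun y => a * f y + g y) x = a * T f x + T g x) ->
  (forall f x, (T f x)² <= C * window f (pos x)) -> bounded_op T.
Proof.
  intros HC Hlin HT. split; [intros; apply Hlin|].
  exists (5 * C). split; [lra|]. intros f B HB. exact (psum2_le_window T C f B HC (HT f) HB).
Qed.

Definition nbrL (x : simplex) : list simplex :=
  match x with
  | Vtx k => Vtx k :: Edg (k - 1) :: Edg k :: nil
  | Edg k => Edg k :: Vtx k :: Vtx (k + 1) :: Edg (k - 1) :: Edg (k + 1) :: nil
  end%Z.

Definition nbrD (x : simplex) : list simplex :=
  match x with
  | Vtx k => Edg (k - 1) :: Edg k :: nil
  | Edg k => Vtx k :: Vtx (k + 1) :: nil
  end%Z.

Ltac decide_Z_eqb :=
  repeat match goal with |- context [Z.eqb ?a ?b] => destruct (Z.eqb_spec a b) end;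
  simpl; first [lra | exfalso; lia].

Lemma Lmat_occ x y : Lmat x y = occ (nbrL x) y.
Proof.
  destruct x as [k|k], y as [j|j];
    unfold Lmat, meets, memb, verts, occ; simpl; decide_Z_eqb.
Qed.

Lemma Dmat_occ x y : Dmat x y = occ (nbrD x) y.
Proof.
  destruct x as [k|k], y as [j|j];
    unfold Dmat, absd, subsetb, card, memb, verts, occ; simpl; decide_Z_eqb.
Qed.

Definition Lop : op := fun f x => lsum (nbrL x) f.
Definition Dop : op := fun f x => lsum (nbrD x) f.
Definition Linv : op := fun f x => Lop f x - Dop (Dop f) x.

Ltac unfold_ops :=
  unfold Linv, Dop, Lop; simpl; rewrite ?Z.sub_add, ?Z.add_simpl_r.

Lemma Lop_Linv f x : Lop (Linv f) x = f x.
Proof. destruct x; unfold_ops; ring. Qed.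

Lemma Linv_Lop f x : Linv (Lop f) x = f x.
Proof. destruct x; unfold_ops; ring. Qed.

Lemma Lop_window f x : (Lop f x)² <= 5 * window f (pos x).
Proof.
  destruct x as [k|k]; [rewrite window_Vtx | rewrite window_Edg]; unfold_ops.
  - pose proof (Rsqr_sum5_le 0 (f (Edg (k - 1)%Z)) (f (Vtx k)) (f (Edg k)) 0).
    unfold Rsqr in *. nra.
  - pose proof (Rsqr_sum5_le (f (Edg (k - 1)%Z)) (f (Vtx k)) (f (Edg k))
                  (f (Vtx (k + 1)%Z)) (f (Edg (k + 1)%Z))).
    unfold Rsqr in *. nra.
Qed.

Lemma Linv_window f x : (Linv f x)² <= 5 * window f (pos x).
Proof.
  destruct x as [k|k]; [rewrite window_Vtx | rewrite window_Edg]; unfold_ops.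
  - pose proof (Rsqr_sum5_le (- f (Vtx (k - 1)%Z)) (f (Edg (k - 1)%Z)) (- f (Vtx k))
                  (f (Edg k)) (- f (Vtx (k + 1)%Z))).
    unfold Rsqr in *. nra.
  - pose proof (Rsqr_sum5_le 0 (f (Vtx k)) (- f (Edg k)) (f (Vtx (k + 1)%Z)) 0).
    unfold Rsqr in *. nra.
Qed.

Theorem mainTheorem8 :
  exists Lop Linv : op,
    (forall f, is_l2 f -> mx_acts Lmat f (Lop f)) /\
    bounded_op Lop /\
    bounded_op Linv /\
    (forall f, is_l2 f -> forall x, Lop (Linv f) x = f x /\ Linv (Lop f) x = f x) /\
    (forall f, is_l2 f ->
       exists g, mx_acts Dmat f g /\
                 mx_acts Dmat g (fun x => Lop f x - Linv f x)).
Proof.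
  exists Lop, Linv. split; [|split; [|split; [|split]]].
  - intros f _. exact (mx_acts_nbrs _ nbrL f _ Lmat_occ (fun _ => eq_refl)).
  - apply (bounded_op_of_window _ 5); [lra | | apply Lop_window].
    intros f g a [k|k]; unfold_ops; ring.
  - apply (bounded_op_of_window _ 5); [lra | | apply Linv_window].
    intros f g a [k|k]; unfold_ops; ring.
  - intros f _ x. split; [apply Lop_Linv | apply Linv_Lop].
  - intros f _. exists (Dop f).
    split; apply (mx_acts_nbrs _ nbrD _ _ Dmat_occ); intros x; [reflexivity|].
    unfold Linv. change (Dop (Dop f) x) with (lsum (nbrD x) (Dop f)). ring.
Qed.
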